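(* Let $\alpha,\beta$ be real numbers with $0<\alpha<2$ and $0<\beta<2$. There exist constants $c,C>0$ and $N$, independent of $n$, such that for every natural number $n>N$ there is a set $P\subset[0,1]^2$ of $n$ points with $$c\,n^2\le |\Pi_{\alpha,\beta}(P)|\le C\,n^2 .$$
   Context: For a finite set $P\subset\mathbb R^2$ and real numbers $\alpha,\beta$, define the set of ordered triples $$\Pi_{\alpha,\beta}(P)=\{(p,q,r)\in P\times P\times P:\ p\cdot q=\alpha \text{ and } p\cdot r=\beta\},$$ where $\cdot$ is the standard dot product on $\mathbb R^2$ (the points $p,q,r$ need not be distinct). *)

From Stdlib Require Import Reals List.
Import ListNotations.
Open Scope R_scope.

Definition dot (p q : R * R) : R := fst p * fst q + snd p * snd q.

Definition Reqb (x y : R) : bool := if Req_EM_T x y then true else false.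

Definition triples (P : list (R * R)) : list ((R * R) * ((R * R) * (R * R))) :=
  list_prod P (list_prod P P).

(* |Pi_{alpha,beta}(P)| : number of ordered triples (p,q,r) in P^3 with
   p.q = alpha and p.r = beta.  (P is assumed duplicate-free when used.) *)
Definition Pi_card (alpha beta : R) (P : list (R * R)) : nat :=
  length (filter (fun t : (R * R) * ((R * R) * (R * R)) =>
                    let '(p, (q, r)) := t in
                    andb (Reqb (dot p q) alpha) (Reqb (dot p r) beta))
                 (triples P)).

Definition in_unit_square (p : R * R) : Prop :=
  0 <= fst p <= 1 /\ 0 <= snd p <= 1.

From Stdlib Require Import Reals List Lia Lra FinFun.
Import ListNotations.
Open Scope R_scope.

(* Put about n/2 points on each of the lines x + y = alpha and x + y = beta,
   on opposite sides of the diagonal, and add the corner (1,1).  The corner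
   has dot product alpha with every point of the first line and beta with
   every point of the second, which gives about n^2/4 triples.  Any other
   point p of the set lies off the diagonal, so p is not orthogonal to the
   direction (1,-1) of these lines: the level set {q | p.q = c} meets each
   line at most once, and p has at most 3 partners q with p.q = alpha.  So
   the points other than the corner contribute at most 3n^2 triples. *)

Lemma Reqb_true_iff (x y : R) : Reqb x y = true <-> x = y.
Proof. unfold Reqb; destruct (Req_EM_T x y); split; congruence. Qed.

Lemma length_filter_list_prod {A B : Type} (f : A -> bool) (g : B -> bool)
    (la : list A) (lb : list B) :
  length (filter (fun t : A * B => let '(x, y) := t in andb (f x) (g y)) (list_prod la lb))
  = (length (filter f la) * length (filter g lb))%nat.
Proof.
  induction la as [|a la IH]; [reflexivity|]; simpl.
  rewrite filter_app, length_app, IH, filter_map_swap, length_map.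
  destruct (f a); simpl; [reflexivity|].
  now rewrite filter_false.
Qed.

Lemma list_sum_map_le {A : Type} (f : A -> nat) (K : nat) (l : list A) :
  (forall x, In x l -> (f x <= K)%nat) -> (list_sum (map f l) <= length l * K)%nat.
Proof.
  induction l as [|a l IH]; simpl; intros Hf; [lia|].
  pose proof (Hf a (or_introl eq_refl)).
  pose proof (IH (fun x Hx => Hf x (or_intror Hx))). lia.
Qed.

Lemma NoDup_length_le_1 {A : Type} (l : list A) :
  NoDup l -> (forall x y, In x l -> In y l -> x = y) -> (length l <= 1)%nat.
Proof.
  intros Hl Heq; destruct l as [|x [|y l]]; simpl; try lia.
  inversion Hl as [|? ? Hx]; subst.
  exfalso; apply Hx; rewrite (Heq x y); simpl; auto.
Qed.

Definition count_dot (p : R * R) (c : R) (l : list (R * R)) : nat :=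
  length (filter (fun q => Reqb (dot p q) c) l).

Lemma count_dot_app p c l1 l2 :
  count_dot p c (l1 ++ l2) = (count_dot p c l1 + count_dot p c l2)%nat.
Proof. unfold count_dot; now rewrite filter_app, length_app. Qed.

Lemma Pi_card_sum alpha beta P :
  Pi_card alpha beta P
  = list_sum (map (fun p => count_dot p alpha P * count_dot p beta P)%nat P).
Proof.
  unfold Pi_card, triples; generalize P at 1 6 as A.
  induction A as [|a A IH]; [reflexivity|]; simpl.
  rewrite filter_app, length_app, IH, filter_map_swap, length_map.
  f_equal; apply length_filter_list_prod.
Qed.

Definition corner : R * R := (1, 1).

Definition on_antidiagonal (s : R) (q : R * R) : Prop := fst q + snd q = s.

Lemma count_dot_corner c l :
  (forall q, In q l -> on_antidiagonal c q) -> count_dot corner c l = length l.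
Proof.
  intros Hl; unfold count_dot, corner.
  rewrite (@filter_ext_in _ _ (fun _ => true)), filter_true; [reflexivity|].
  intros q Hq; apply Reqb_true_iff.
  specialize (Hl q Hq); unfold on_antidiagonal, dot in *; simpl; lra.
Qed.

Lemma dot_injective_on_antidiagonal p s q q' :
  fst p <> snd p -> on_antidiagonal s q -> on_antidiagonal s q' ->
  dot p q = dot p q' -> q = q'.
Proof.
  destruct p as [a b], q as [x y], q' as [x' y'].
  unfold on_antidiagonal, dot; simpl; intros Hab Hq Hq' E.
  replace y with (s - x) in E by lra; replace y' with (s - x') in E by lra.
  assert (Hx : (a - b) * (x - x') = 0) by lra.
  destruct (Rmult_integral _ _ Hx); [lra|].
  f_equal; lra.
Qed.

Lemma count_dot_antidiagonal_le_1 p c s l :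
  fst p <> snd p -> NoDup l -> (forall q, In q l -> on_antidiagonal s q) ->
  (count_dot p c l <= 1)%nat.
Proof.
  intros Hp Hl Hline; apply NoDup_length_le_1; [now apply NoDup_filter|].
  intros q q' Hq Hq'; apply filter_In in Hq as [Hq Eq], Hq' as [Hq' Eq'].
  apply Reqb_true_iff in Eq, Eq'.
  apply (dot_injective_on_antidiagonal p s); auto; congruence.
Qed.

Section TwoLines.

Variables (alpha beta : R) (Qa Qb : list (R * R)).
Hypothesis Qa_NoDup : NoDup Qa.
Hypothesis Qb_NoDup : NoDup Qb.
Hypothesis Qa_below : forall q, In q Qa -> on_antidiagonal alpha q /\ fst q < snd q.
Hypothesis Qb_above : forall q, In q Qb -> on_antidiagonal beta q /\ snd q < fst q.

Let P := corner :: Qa ++ Qb.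

Lemma two_lines_off_diagonal p : In p (Qa ++ Qb) -> fst p <> snd p.
Proof.
  intros Hp; apply in_app_or in Hp as [Hp|Hp];
    [apply Qa_below in Hp | apply Qb_above in Hp]; lra.
Qed.

Lemma two_lines_NoDup : NoDup P.
Proof.
  constructor.
  - intros Hc; apply two_lines_off_diagonal in Hc; unfold corner in Hc; simpl in Hc; lra.
  - apply NoDup_app; auto.
    intros q Hqa Hqb; apply Qa_below in Hqa; apply Qb_above in Hqb; lra.
Qed.

Lemma count_dot_two_lines_le_3 p c : fst p <> snd p -> (count_dot p c P <= 3)%nat.
Proof.
  intros Hp; change P with ([corner] ++ Qa ++ Qb); rewrite !count_dot_app.
  pose proof (filter_length_le (fun q => Reqb (dot p q) c) [corner]).
  pose proof (count_dot_antidiagonal_le_1 p c alpha Qa Hp Qa_NoDup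
                (fun q Hq => proj1 (Qa_below q Hq))).
  pose proof (count_dot_antidiagonal_le_1 p c beta Qb Hp Qb_NoDup
                (fun q Hq => proj1 (Qb_above q Hq))).
  unfold count_dot at 1; simpl in *; lia.
Qed.

Lemma Pi_card_two_lines_ge : (length Qa * length Qb <= Pi_card alpha beta P)%nat.
Proof.
  rewrite Pi_card_sum.
  set (f := fun p => (count_dot p alpha P * count_dot p beta P)%nat).
  change (list_sum (map f P)) with (f corner + list_sum (map f (Qa ++ Qb)))%nat.
  assert (Ha : (length Qa <= count_dot corner alpha P)%nat).
  { change P with ([corner] ++ Qa ++ Qb); rewrite !count_dot_app.
    rewrite (count_dot_corner alpha Qa) by (intros q Hq; apply Qa_below, Hq); lia. }
  assert (Hb : (length Qb <= count_dot corner beta P)%nat).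
  { change P with ([corner] ++ Qa ++ Qb); rewrite !count_dot_app.
    rewrite (count_dot_corner beta Qb) by (intros q Hq; apply Qb_above, Hq); lia. }
  pose proof (Nat.mul_le_mono _ _ _ _ Ha Hb); unfold f; lia.
Qed.

Lemma Pi_card_two_lines_le : (Pi_card alpha beta P <= 4 * length P * length P)%nat.
Proof.
  rewrite Pi_card_sum.
  set (f := fun p => (count_dot p alpha P * count_dot p beta P)%nat).
  change (list_sum (map f P)) with (f corner + list_sum (map f (Qa ++ Qb)))%nat.
  set (N := length P).
  assert (Hcorner : (f corner <= N * N)%nat)
    by (apply Nat.mul_le_mono; apply filter_length_le).
  assert (Hrest : (list_sum (map f (Qa ++ Qb)) <= length (Qa ++ Qb) * (3 * N))%nat).
  { apply list_sum_map_le; intros p Hp; apply Nat.mul_le_mono.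
    - now apply count_dot_two_lines_le_3, two_lines_off_diagonal.
    - apply filter_length_le. }
  assert (HN : N = S (length (Qa ++ Qb))) by reflexivity.
  nia.
Qed.

End TwoLines.

Lemma exists_NoDup_in_interval lo hi m :
  lo < hi -> exists xs : list R, NoDup xs /\ length xs = m /\
    forall x, In x xs -> lo < x < hi.
Proof.
  intros Hlh.
  assert (Hm : 0 < INR m + 1) by (pose proof (pos_INR m); lra).
  exists (map (fun k => lo + (hi - lo) * ((INR k + 1) / (INR m + 1))) (seq 0 m)).
  split; [|split].
  - apply Injective_map_NoDup; [|apply seq_NoDup].
    intros k k' E; apply INR_eq.
    apply Rplus_eq_reg_l, Rmult_eq_reg_l in E; [|lra].
    unfold Rdiv in E; apply Rmult_eq_reg_r in E; [lra|].
    apply Rinv_neq_0_compat; lra.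
  - now rewrite length_map, length_seq.
  - intros x Hx; apply in_map_iff in Hx as [k [<- Hk]]; apply in_seq in Hk.
    assert (Hk' : INR k + 1 <= INR m) by (rewrite <- S_INR; apply le_INR; lia).
    set (t := (INR k + 1) / (INR m + 1)).
    assert (Ht : t * (INR m + 1) = INR k + 1) by (unfold t; field; lra).
    pose proof (pos_INR k).
    assert (Hfrac : 0 < t < 1) by nra.
    split; nra.
Qed.

Definition antidiagonal_point (s x : R) : R * R := (x, s - x).

Lemma exists_antidiagonal_points s lo hi m :
  lo < hi -> exists Q, NoDup Q /\ length Q = m /\
    forall q, In q Q -> on_antidiagonal s q /\ lo < fst q < hi.
Proof.
  intros Hlh; destruct (exists_NoDup_in_interval lo hi m Hlh) as (xs & Hxs & Hlen & Hrng).
  exists (map (antidiagonal_point s) xs); split; [|split].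
  - apply Injective_map_NoDup; auto.
    intros x x' E; unfold antidiagonal_point in E; congruence.
  - now rewrite length_map.
  - intros q Hq; apply in_map_iff in Hq as [x [<- Hx]].
    unfold on_antidiagonal, antidiagonal_point; simpl; split; [ring | auto].
Qed.

Lemma exists_antidiagonal_points_below s m :
  0 < s < 2 -> exists Q, NoDup Q /\ length Q = m /\
    forall q, In q Q -> in_unit_square q /\ on_antidiagonal s q /\ fst q < snd q.
Proof.
  intros Hs.
  assert (Hlo : Rmax 0 (s - 1) < s / 2) by (apply Rmax_lub_lt; lra).
  destruct (exists_antidiagonal_points s _ _ m Hlo) as (Q & HQ & Hlen & Hpts).
  exists Q; split; [|split]; auto.
  intros [x y] Hq; destruct (Hpts _ Hq) as [Hline Hx].
  pose proof (Rmax_l 0 (s - 1)); pose proof (Rmax_r 0 (s - 1)).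
  unfold in_unit_square, on_antidiagonal in *; simpl in *; repeat split; lra.
Qed.

Lemma exists_antidiagonal_points_above s m :
  0 < s < 2 -> exists Q, NoDup Q /\ length Q = m /\
    forall q, In q Q -> in_unit_square q /\ on_antidiagonal s q /\ snd q < fst q.
Proof.
  intros Hs.
  assert (Hhi : s / 2 < Rmin 1 s) by (apply Rmin_glb_lt; lra).
  destruct (exists_antidiagonal_points s _ _ m Hhi) as (Q & HQ & Hlen & Hpts).
  exists Q; split; [|split]; auto.
  intros [x y] Hq; destruct (Hpts _ Hq) as [Hline Hx].
  pose proof (Rmin_l 1 s); pose proof (Rmin_r 1 s).
  unfold in_unit_square, on_antidiagonal in *; simpl in *; repeat split; lra.
Qed.

Lemma exists_balanced_split n :
  (2 < n)%nat -> exists a b, n = S (a + b) /\ (n * n <= 18 * (a * b))%nat.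
Proof.
  intros Hn; exists ((n - 1) / 2)%nat, ((n - 1) / 2 + (n - 1) mod 2)%nat.
  pose proof (Nat.div_mod_eq (n - 1) 2); pose proof (Nat.mod_upper_bound (n - 1) 2).
  split; nia.
Qed.

Theorem proposition1 (alpha beta : R)
  (Halpha : 0 < alpha < 2) (Hbeta : 0 < beta < 2) :
  exists (c C : R) (N : nat), 0 < c /\ 0 < C /\
    forall n : nat, (N < n)%nat ->
      exists P : list (R * R),
        NoDup P /\ length P = n /\
        (forall p, In p P -> in_unit_square p) /\
        c * (INR n) ^ 2 <= INR (Pi_card alpha beta P) <= C * (INR n) ^ 2.
Proof.
  exists (1 / 18), 4, 2%nat; split; [lra|]; split; [lra|]; intros n Hn.
  destruct (exists_balanced_split n Hn) as (a & b & Hab & Hsplit).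
  destruct (exists_antidiagonal_points_below alpha a Halpha) as (Qa & HQa & Hla & Qa_pts).
  destruct (exists_antidiagonal_points_above beta b Hbeta) as (Qb & HQb & Hlb & Qb_pts).
  pose proof (fun q Hq => proj2 (Qa_pts q Hq)) as Qa_below.
  pose proof (fun q Hq => proj2 (Qb_pts q Hq)) as Qb_above.
  assert (Hlen : length (corner :: Qa ++ Qb) = n) by (simpl; rewrite length_app; lia).
  exists (corner :: Qa ++ Qb); split; [|split; [|split; [|split]]].
  - exact (two_lines_NoDup alpha beta Qa Qb HQa HQb Qa_below Qb_above).
  - exact Hlen.
  - intros p [<-|Hp]; [unfold in_unit_square, corner; simpl; lra|].
    apply in_app_or in Hp as [Hp|Hp]; [apply Qa_pts, Hp | apply Qb_pts, Hp].
  - pose proof (Pi_card_two_lines_ge alpha beta Qa Qb Qa_below Qb_above) as Hge.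
    rewrite Hla, Hlb in Hge.
    assert (Hnat : (n * n <= 18 * Pi_card alpha beta (corner :: Qa ++ Qb))%nat) by nia.
    apply le_INR in Hnat; rewrite !mult_INR in Hnat.
    replace (INR 18) with 18 in Hnat by (simpl; lra); lra.
  - pose proof (Pi_card_two_lines_le alpha beta Qa Qb HQa HQb Qa_below Qb_above) as Hle.
    rewrite Hlen in Hle; apply le_INR in Hle; rewrite !mult_INR in Hle.
    replace (INR 4) with 4 in Hle by (simpl; lra); lra.
Qed.
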